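(* Let $\ell\ge1$. Let $c_i=(c_{i,0},\dots,c_{i,\ell_i-1})$ and $c_j=(c_{j,0},\dots,c_{j,\ell_j-1})$ be two distinct codewords of a binary prefix-free code with lengths $\ell_i\le\ell_j$, and let $y_i=\sum_{t=0}^{\ell_i-1}c_{i,t}x^t$ and $y_j=\sum_{t=0}^{\ell_j-1}c_{j,t}x^t$ in $F_2[x]$. Let $r_0\in F_2[[x]]$ be arbitrary, let $s\in F_2[x]$ have degree less than $\ell$, and define the shares $$Z_i\equiv r_0+s\,y_i\pmod{x^{\ell_i+\ell-1}},\qquad Z_j\equiv r_0+s\,y_j\pmod{x^{\ell_j+\ell-1}},$$ taken as polynomials of degree less than $\ell_i+\ell-1$ and $\ell_j+\ell-1$ respectively. Let $L_{i,j}$ be the largest integer with $x^{L_{i,j}}\mid (y_i-y_j)$. Then $L_{i,j}\le \ell_i-1$, and $s$ is the unique polynomial of degree less than $\ell$ satisfying $$s\,(y_i-y_j)\equiv Z_i-Z_j\pmod{x^{\ell_i+\ell-1}};$$ explicitly, $$s\equiv\frac{(Z_i-Z_j)/x^{L_{i,j}}}{(y_i-y_j)/x^{L_{i,j}}}\pmod{x^{\ell}},$$ where the denominator has nonzero constant term and the quotient means multiplication by its inverse in $F_2[x]/(x^\ell)$.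
   Context: A binary prefix-free code is a set of finite binary strings (codewords) none of which is a prefix of another. $F_2[[x]]$ denotes formal power series over $F_2$; reduction of a power series modulo $x^N$ means truncation to its terms of degree less than $N$. *)

From HB Require Import structures.
From mathcomp Require Import all_boot all_order all_algebra.
Set Implicit Arguments. Unset Strict Implicit. Unset Printing Implicit Defensive.
Import GRing.Theory.
Local Open Scope ring_scope.

Definition prefix_free (C : seq (seq bool)) : Prop :=
  forall a b, a \in C -> b \in C -> a != b -> ~~ prefix a b.

Definition cw_poly (c : seq bool) : {poly 'F_2} :=
  \poly_(t < size c) (nth false c t)%:R.

Definition pseries := nat -> 'F_2.

Definition ps_trunc (N : nat) (r : pseries) : {poly 'F_2} :=
  \poly_(k < N) r k.

Definition share (N : nat) (r0 : pseries) (s y : {poly 'F_2}) : {poly 'F_2} :=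
  ps_trunc N r0 + take_poly N (s * y).

From HB Require Import structures.
From mathcomp Require Import all_boot all_order all_algebra.
From mathcomp Require Import ring zify.
Set Implicit Arguments. Unset Strict Implicit. Unset Printing Implicit Defensive.
Import GRing.Theory.
Local Open Scope ring_scope.

(* Let y = y_i - y_j and Z = Z_i - Z_j. Both shares are truncations of
   r0 + s y at orders >= l_i + l - 1, so s y = Z mod x^(l_i + l - 1) and the
   random r0 cancels. The two codewords differ at some position t < l_i (the
   code is prefix-free), so y has a nonzero coefficient there and its
   x-adic valuation L is at most l_i - 1. Writing y = D x^L with D(0) != 0,
   the congruence becomes (s D - Z/x^L) x^L = 0 mod x^(L + l), i.e.
   s D = Z/x^L mod x^l; since D is invertible modulo x^l and deg s < l,
   this determines s. *)

Section PolyModXn.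
Variable F : fieldType.
Implicit Types p q D N Z s u : {poly F}.

Lemma dvdp_XnP n p : reflect (forall i, (i < n)%N -> p`_i = 0) ('X^n %| p).
Proof.
apply: (iffP (modp_eq0P _ _)); rewrite -Pdiv.IdomainMonic.take_poly_modp.
  by move=> h i hi; have := coef_take_poly n p i; rewrite hi h coef0 => <-.
move=> h; apply/polyP => i; rewrite coef_take_poly coef0.
by case: ifP => // /h.
Qed.

Lemma dvdp_Xn_leq_coef L t p : 'X^L %| p -> p`_t != 0 -> (L <= t)%N.
Proof. by move/dvdp_XnP=> h; apply: contraR; rewrite -ltnNge => /h ->. Qed.

Lemma dvdp_Xn_size_eq0 n p : (size p <= n)%N -> 'X^n %| p -> p = 0.
Proof.
move=> hp; apply: contraTeq => p0; apply/negP => /(dvdp_leq p0).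
by rewrite size_polyXn ltnNge hp.
Qed.

Lemma coprimep_Xn k D : D`_0 != 0 -> coprimep 'X^k D.
Proof.
by move=> D0; apply: coprimep_expl; rewrite coprimep_sym coprimepX /root horner_coef0.
Qed.

Lemma dvdp_mulXn_cancel n L l q : (L + l <= n)%N -> 'X^n %| q * 'X^L -> 'X^l %| q.
Proof.
move=> hn; rewrite dvdp_exp_sub ?polyX_eq0 // => /(dvdp_trans _); apply.
by apply: dvdp_exp2l; lia.
Qed.

Lemma coef0_divp_Xn_neq0 L p :
  'X^L %| p -> (forall m, 'X^m %| p -> (m <= L)%N) -> (p %/ 'X^L)`_0 != 0.
Proof.
move=> hL hmax; apply/eqP => D0.
have hX : 'X^1 %| p %/ 'X^L by apply/dvdp_XnP => -[].
have : 'X^(L.+1) %| p.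
  by rewrite -(divpK hL) exprS; apply: dvdp_mul hX (dvdpp _).
by move/hmax; rewrite ltnn.
Qed.

Lemma inv_modXn_exists l D : D`_0 != 0 -> exists u, 'X^l %| D * u - 1.
Proof.
move=> D0; have /Bezout_eq1_coprimepP [[v u] /= Duv] := coprimep_Xn l D0.
exists u; apply/dvdpP; exists (- v).
by rewrite -Duv; ring.
Qed.

Lemma modXn_solution_unique n L l D Z s s' :
  D`_0 != 0 -> (L + l <= n)%N -> (size s <= l)%N -> (size s' <= l)%N ->
  'X^n %| s * (D * 'X^L) - Z -> 'X^n %| s' * (D * 'X^L) - Z -> s' = s.
Proof.
move=> D0 hn hs hs' hsZ hs'Z.
have hdiff : 'X^n %| ((s' - s) * D) * 'X^L.
  have -> : (s' - s) * D * 'X^L =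
    (s' * (D * 'X^L) - Z) - (s * (D * 'X^L) - Z) by ring.
  exact: dvdp_sub.
have hdvd : 'X^l %| s' - s.
  by rewrite -(Gauss_dvdpl _ (coprimep_Xn l D0)); apply: dvdp_mulXn_cancel hdiff.
apply/eqP; rewrite -subr_eq0; apply/eqP; apply: (dvdp_Xn_size_eq0 _ hdvd).
by rewrite (leq_trans (size_polyD _ _)) // size_polyN geq_max hs hs'.
Qed.

Lemma modXn_solution_formula n L l D N s u :
  (L + l <= n)%N -> 'X^n %| s * (D * 'X^L) - N * 'X^L ->
  'X^l %| D * u - 1 -> 'X^l %| s - N * u.
Proof.
move=> hn hsN hu.
have hsDN : 'X^l %| s * D - N.
  by apply: (dvdp_mulXn_cancel hn); rewrite mulrBl -mulrA.
have -> : s - N * u = - (s * (D * u - 1)) + u * (s * D - N) by ring.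
by rewrite dvdp_add ?dvdpNr ?dvdp_mull.
Qed.

End PolyModXn.

Lemma exists_nth_neq_of_not_prefix (T : eqType) (x0 : T) (a b : seq T) :
  (size a <= size b)%N -> ~~ prefix a b ->
  exists2 t, (t < size a)%N & nth x0 a t != nth x0 b t.
Proof.
move=> hab npre.
have /existsP [[t ht] /= hne] : [exists t : 'I_(size a), nth x0 a t != nth x0 b t].
  apply: contraR npre => /existsPn hall; rewrite prefixE; apply/eqP.
  apply: (eq_from_nth (x0 := x0)); first by rewrite size_takel.
  move=> i; rewrite size_takel // => hi; rewrite nth_take //.
  by apply/esym/eqP; rewrite -[_ == _]negbK (hall (Ordinal hi)).
by exists t.
Qed.

Lemma coef_cw_poly c t : (cw_poly c)`_t = (nth false c t)%:R.
Proof.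
by rewrite coef_poly; case: ltnP => // /(nth_default false) ->.
Qed.

Lemma coef_cw_polyB_neq0 a b t :
  nth false a t != nth false b t -> (cw_poly a - cw_poly b)`_t != 0.
Proof. by rewrite coefB !coef_cw_poly; case: (nth _ a t); case: (nth _ b t). Qed.

Lemma dvdp_Xn_share_sub n n' r0 s y y' : (n <= n')%N ->
  'X^n %| s * (y - y') - (share n r0 s y - share n' r0 s y').
Proof.
move=> hn; apply/dvdp_XnP => k hk.
have hk' : (k < n')%N by apply: leq_trans hn.
rewrite /share /ps_trunc !coefB !coefD !coef_take_poly !coef_poly hk hk'.
rewrite mulrBr coefB; ring.
Qed.

Theorem mainTheorem6 (l : nat) (C : seq (seq bool)) (ci cj : seq bool)
  (r0 : pseries) (s : {poly 'F_2}) (L : nat) :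
  (1 <= l)%N ->
  prefix_free C -> ci \in C -> cj \in C -> ci != cj ->
  (size ci <= size cj)%N ->
  (size s <= l)%N ->
  let yi := cw_poly ci in
  let yj := cw_poly cj in
  let Zi := share (size ci + l - 1) r0 s yi in
  let Zj := share (size cj + l - 1) r0 s yj in
  (* L is the largest integer with x^L | (yi - yj) *)
  'X^L %| (yi - yj) ->
  (forall m : nat, 'X^m %| (yi - yj) -> (m <= L)%N) ->
  [/\ (L <= size ci - 1)%N,
      (* s is the unique polynomial of degree < l solving the congruence *)
      'X^(size ci + l - 1) %| (s * (yi - yj) - (Zi - Zj)),
      (forall s' : {poly 'F_2}, (size s' <= l)%N ->
         'X^(size ci + l - 1) %| (s' * (yi - yj) - (Zi - Zj)) -> s' = s) &
      (* explicit formula *)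
      let D := (yi - yj) %/ 'X^L in
      let N := (Zi - Zj) %/ 'X^L in
      [/\ 'X^L %| (Zi - Zj), D`_0 != 0,
          exists u : {poly 'F_2}, 'X^l %| (D * u - 1) &
          forall u : {poly 'F_2}, 'X^l %| (D * u - 1) -> 'X^l %| (s - N * u)]].
Proof.
move=> hl pf hi hj hne hsz hs yi yj Zi Zj hL hmax.
set D := (yi - yj) %/ 'X^L; set N := (Zi - Zj) %/ 'X^L.
have [t ht /coef_cw_polyB_neq0 yt] :=
  exists_nth_neq_of_not_prefix false hsz (pf _ _ hi hj hne).
have hLt := dvdp_Xn_leq_coef hL yt.
(* [ht] mentions [size] at [Equality.sort bool]; lia needs it at [bool]. *)
rewrite /= in ht.
have hLn : (L + l <= size ci + l - 1)%N by lia.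
have hcong : 'X^(size ci + l - 1) %| s * (yi - yj) - (Zi - Zj).
  by apply: dvdp_Xn_share_sub; lia.
have hy : yi - yj = D * 'X^L by rewrite divpK.
have hZ : 'X^L %| Zi - Zj.
  have -> : Zi - Zj = s * (D * 'X^L) - (s * (yi - yj) - (Zi - Zj)).
    by rewrite -hy; ring.
  apply: dvdp_sub; first exact/dvdp_mull/dvdp_mull/dvdpp.
  by apply: dvdp_trans hcong; apply: dvdp_exp2l; lia.
have hD0 : D`_0 != 0 by apply: coef0_divp_Xn_neq0.
rewrite hy in hcong *; split => //; first by lia.
  by move=> s' hs' hs'c; apply: modXn_solution_unique hD0 hLn hs hs' hcong hs'c.
split => //=; first exact: inv_modXn_exists.
by move=> u; apply: modXn_solution_formula hLn _; rewrite /N (divpK hZ).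
Qed.
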